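(* There are absolute constants $c_1,c_2>0$ such that the following holds. Let $\mathcal U$ be a finite set, $\epsilon<1/400$, $\Pi$ an orthogonal projector on $\mathbb{R}^{\mathcal U}$, and $f:\mathcal U\to\{0,1\}$ with $\Pr_{u\in\mathcal U}[f(u)=1]=\mu>0$ and $\|\Pi f\|_2^2\ge(1-\epsilon)\mu$. Then there is a function $\bar f:\mathcal U\to\mathbb{R}$ such that $\|\Pi\bar f\|_4^4\ge c_1\mu$ and $(\Pi f)(u)^2\ge c_2|\bar f(u)|$ for every $u\in\mathcal U$.
   Context: Norms and inner products on $\mathbb{R}^{\mathcal U}$ use the uniform (expectation) measure: $\langle g,h\rangle=\mathbb{E}_{u}g(u)h(u)$, $\|g\|_p=(\mathbb{E}_u|g(u)|^p)^{1/p}$; orthogonality of $\Pi$ refers to this inner product. *)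

(* real-closed fields (rcfType) stand in for the reals. *)
From HB Require Import structures.
From mathcomp Require Import all_boot all_order all_algebra.
Set Implicit Arguments. Unset Strict Implicit. Unset Printing Implicit Defensive.
Import Order.TTheory GRing.Theory Num.Theory.
Local Open Scope ring_scope.

Definition expect (R : rcfType) (U : finType) (g : U -> R) : R :=
  (\sum_(u : U) g u) / #|U|%:R.

Definition inner (R : rcfType) (U : finType) (g h : U -> R) : R :=
  expect (fun u => g u * h u).

Definition lpnorm_pow (R : rcfType) (U : finType) (p : nat) (g : U -> R) : R :=
  expect (fun u => `|g u| ^+ p).

Definition orth_proj (R : rcfType) (U : finType) (Pi : (U -> R) -> (U -> R)) : Prop :=
  [/\ (forall (a : R) (g h : U -> R) (u : U),
         Pi (fun x => a * g x + h x) u = a * Pi g u + Pi h u),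
      (forall (g : U -> R) (u : U), Pi (Pi g) u = Pi g u)
    & (forall g h : U -> R, inner (Pi g) h = inner g (Pi h))].

Definition indic (R : rcfType) (U : finType) (f : U -> bool) : U -> R :=
  fun u => (f u)%:R.

Definition prob (R : rcfType) (U : finType) (f : U -> bool) : R :=
  #|[set u | f u]|%:R / #|U|%:R.

From HB Require Import structures.
From mathcomp Require Import all_boot all_order all_algebra.
From mathcomp Require Import lra.
Set Implicit Arguments. Unset Strict Implicit. Unset Printing Implicit Defensive.
Import Order.TTheory GRing.Theory Num.Theory.
Local Open Scope ring_scope.

(* Write F for the 0/1 function f, G := Pi F, mu := Pr[f = 1],
   and take fbar := B, the indicator of {u | f u and G u >= 1/2}.  Then
   |B| <= 4 G^2 pointwise, so c2 = 1/4 works trivially; the content is the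
   lower bound E[(Pi B)^4] >= mu/20.
   (1) Since Pi is an orthogonal projector, <G,G> = <F,G>, hence the defect
       d := E[(F - G)^2] = mu - ||G||_2^2 is at most eps * mu.
   (2) A pointwise quadratic inequality gives F/2 - 2(F - G)^2 <= G B,
       so <G,B> >= mu/2 - 2d.
   (3) A pointwise quartic inequality gives F x/2 - 3F/16 <= x^4 for all x;
       with x := Pi B and <F, Pi B> = <G, B> (self-adjointness) this yields
       E[(Pi B)^4] >= <G,B>/2 - 3mu/16 >= mu/16 - d >= (1/16 - 1/400) mu. *)

Section Expectation.
Variables (R : rcfType) (U : finType).
Implicit Types (g h : U -> R) (a : R).

Lemma eq_expect g h : (forall u, g u = h u) -> expect g = expect h.
Proof. by move=> gh; rewrite /expect (eq_bigr _ (fun u _ => gh u)). Qed.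

Lemma expect_le g h : (forall u, g u <= h u) -> expect g <= expect h.
Proof.
by move=> gh; rewrite /expect ler_wpM2r ?invr_ge0 ?ler0n // ler_sum.
Qed.

Lemma expectD g h : expect (fun u => g u + h u) = expect g + expect h.
Proof. by rewrite /expect big_split mulrDl. Qed.

Lemma expectN g : expect (fun u => - g u) = - expect g.
Proof. by rewrite /expect sumrN mulNr. Qed.

Lemma expectZ a g : expect (fun u => a * g u) = a * expect g.
Proof. by rewrite /expect -mulr_sumr mulrA. Qed.

Lemma expectB g h : expect (fun u => g u - h u) = expect g - expect h.
Proof. by rewrite expectD expectN. Qed.

Lemma lpnorm_pow_even k g :
  lpnorm_pow (2 * k) g = expect (fun u => g u ^+ (2 * k)).
Proof.
apply: eq_expect => u.
by rewrite !exprM real_normK ?num_real.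
Qed.

Lemma lpnorm_pow2_inner g : lpnorm_pow 2 g = inner g g.
Proof. by rewrite (lpnorm_pow_even 1); apply: eq_expect => u; rewrite expr2. Qed.

Lemma prob_expect (f : U -> bool) : prob R f = expect (indic R f).
Proof.
rewrite /prob /expect /indic; congr (_ / _).
rewrite (bigID f) /= [X in _ + X]big1 => [|u /negbTE -> //].
by rewrite addr0 (eq_bigr (fun _ => 1)) => [|u ->]; rewrite ?sumr_const ?cardsE.
Qed.

End Expectation.

Section ScalarInequalities.
Variable R : rcfType.

(* The candidate fbar at a point: keep u when f u holds and (Pi f) u >= 1/2. *)
Definition heavy (b : bool) (y : R) : R := if b && (1/2 <= y) then 1 else 0.

(* A heavy point has (Pi f)^2 >= 1/4, which gives the constant c2 = 1/4. *)
Lemma heavy_le_sqr b y : 4^-1 * `|heavy b y| <= y ^+ 2.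
Proof.
rewrite /heavy; case: ifP => [/andP [_ hy]|_]; last by rewrite normr0 mulr0 sqr_ge0.
by rewrite normr1 mulr1 expr2; nra.
Qed.

Lemma heavy_correlation (b : bool) (y : R) :
  2^-1 * b%:R - 2 * (b%:R - y) ^+ 2 <= y * heavy b y.
Proof.
rewrite /heavy; case: b => /=; last by rewrite mulr0 add0r expr2; nra.
case: (lerP (1/2) y) => hy; rewrite ?mulr1 ?mulr0 expr2.
- by have := sqr_ge0 (y - 3/4); nra.
- have : 0 < (1/2 - y) * (3/2 - y) by apply: mulr_gt0; lra.
  nra.
Qed.

(* Step (3): F x/2 - 3F/16 <= x^4 for F in {0,1}; for F = 1 the difference
   factors as (x - 1/2)^2 (x^2 + x + 3/4). *)
Lemma quartic_lower_bound (b : bool) (x : R) :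
  2^-1 * (b%:R * x) - 3/16 * b%:R <= x ^+ 4.
Proof.
have x4 : x ^+ 4 = (x * x) * (x * x) by rewrite (exprM x 2 2) expr2 expr2.
rewrite x4; case: b => /=; last by nra.
have hq : 0 <= x * x + x + 3/4 by have := sqr_ge0 (x + 1/2); nra.
by have := mulr_ge0 (sqr_ge0 (x - 1/2)) hq; rewrite expr2; nra.
Qed.

End ScalarInequalities.

Section OrthogonalProjector.
Variables (R : rcfType) (U : finType) (Pi : (U -> R) -> (U -> R)).
Hypothesis Pi_orth : orth_proj Pi.

Lemma inner_proj_r (g h : U -> R) : inner g (Pi h) = inner (Pi g) h.
Proof. by case: Pi_orth => _ _ ->. Qed.

Lemma inner_proj_self (g : U -> R) : inner (Pi g) (Pi g) = inner g (Pi g).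
Proof.
case: Pi_orth => _ Pi_idem _; rewrite -inner_proj_r.
by apply: eq_expect => u; rewrite Pi_idem.
Qed.

Variable f : U -> bool.
Let F : U -> R := indic R f.
Let G : U -> R := Pi F.
Let mu : R := prob R f.

Definition heavy_part : U -> R := fun u => heavy (f u) (G u).

(* Step (1): the L2 defect E[(F - Pi F)^2] of Pi on f equals mu - ||Pi F||^2,
   because F^2 = F and <Pi F, Pi F> = <F, Pi F>. *)
Definition defect : R := expect (fun u => (F u - G u) ^+ 2).

Lemma defectE : defect = mu - lpnorm_pow 2 G.
Proof.
have F_idem u : F u * F u = F u by rewrite /F /indic; case: (f u); rewrite ?mulr1 ?mulr0.
rewrite /defect (eq_expect (h := fun u => F u - 2 * (F u * G u) + G u * G u)).
  rewrite expectD expectB expectZ -/(inner F G) -/(inner G G).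
  by rewrite lpnorm_pow2_inner inner_proj_self /mu prob_expect; lra.
by move=> u; rewrite sqrrB expr2 F_idem mulr2n mulrDl mul1r.
Qed.

Lemma heavy_part_correlation : 2^-1 * mu - 2 * defect <= inner G heavy_part.
Proof.
rewrite /mu prob_expect /defect -!expectZ -expectB.
exact: expect_le (fun u => heavy_correlation (f u) (G u)).
Qed.

Lemma heavy_part_fourth_moment :
  2^-1 * inner G heavy_part - 3/16 * mu <= lpnorm_pow 4 (Pi heavy_part).
Proof.
rewrite /G -inner_proj_r /mu prob_expect -!expectZ -expectB (lpnorm_pow_even 2).
exact: expect_le (fun u => quartic_lower_bound (f u) (Pi heavy_part u)).
Qed.

End OrthogonalProjector.

Lemma ratr_inv_nat (R : rcfType) (n : nat) : ratr (n%:R^-1 : rat) = n%:R^-1 :> R.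
Proof. by rewrite fmorphV; congr (_^-1); exact: ratr_nat. Qed.

Theorem lemma4p11 :
  exists c1 c2 : rat, 0 < c1 /\ 0 < c2 /\
  forall (R : rcfType) (U : finType) (eps : R)
         (Pi : (U -> R) -> (U -> R)) (f : U -> bool),
    eps < 1 / 400 ->
    orth_proj Pi ->
    0 < prob R f ->
    (1 - eps) * prob R f <= lpnorm_pow 2 (Pi (indic R f)) ->
    exists fbar : U -> R,
      ratr c1 * prob R f <= lpnorm_pow 4 (Pi fbar) /\
      (forall u : U, ratr c2 * `|fbar u| <= (Pi (indic R f) u) ^+ 2).
Proof.
exists 20%:R^-1, 4%:R^-1; split=> //; split=> //.
move=> R U eps Pi f eps_small Pi_orth mu_gt0 Pi_f_large.
exists (heavy_part Pi f); rewrite !ratr_inv_nat; split; last first.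
  by move=> u; exact: heavy_le_sqr.
(* The defect is at most eps mu <= mu/400; then chain steps (2) and (3). *)
have defect_small : defect Pi f <= 400^-1 * prob R f.
  have eps_mu : eps * prob R f <= 400^-1 * prob R f by rewrite ler_pM2r //; lra.
  rewrite (defectE Pi_orth f); move: Pi_f_large; rewrite mulrBl mul1r; lra.
have correlation := heavy_part_correlation Pi f.
have fourth_moment := heavy_part_fourth_moment Pi_orth f.
(* eps is no longer needed; dropping it keeps the linear search small. *)
by clear eps_small Pi_f_large; lra.
Qed.
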